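(* Let $D$ be a bipartite digraph on $n$ vertices and let $S_1,S_2$ be sidigraphs with underlying digraph $D$ such that $S_1\in\Delta^1_n$ and $S_2\in\Delta^2_n$. Then $\phi_{S_1}(\iota z)=\epsilon\,\phi_{S_2}(z)$ where $\epsilon=\iota$ if $n\equiv1\pmod 4$, $\epsilon=-\iota$ if $n\equiv 3\pmod 4$, $\epsilon=1$ if $n\equiv 0\pmod 4$, and $\epsilon=-1$ if $n\equiv 2\pmod 4$. Consequently $\mathrm{spec}(S_1)=\iota\,\mathrm{spec}(S_2)$, and if $z_{i1},\dots,z_{in}$ are the eigenvalues of $S_i$ ($i=1,2$), then $E(S_1)=\sum_{j=1}^n|\Im z_{2j}|$ and $E(S_2)=\sum_{j=1}^n|\Im z_{1j}|$.
   Context: A sidigraph is a digraph (no loops, at most one arc from $u$ to $v$) with a sign $\sigma(a)\in\{-1,1\}$ on each arc; its adjacency matrix $A(S)$ has entry $\sigma(v_i,v_j)$ if there is an arc from $v_i$ to $v_j$ and $0$ otherwise, $\phi_S(z)=\det(zI-A(S))$, and $\mathrm{spec}(S)$ is the multiset of its eigenvalues. The energy is $E(S)=\sum_j|\Re z_j|$ over the eigenvalues $z_j$; $\Im$ denotes imaginary part and $\iota=\sqrt{-1}$. The sign of a directed cycle is the product of its arc signs. $\Delta^1_n$: sidigraphs on $n$ vertices with bipartite underlying digraph in which every directed cycle of length $\equiv0\pmod4$ is negative and every directed cycle of length $\equiv2\pmod 4$ is positive. $\Delta^2_n$: sidigraphs on $n$ vertices with bipartite underlying digraph in which every directed cycle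 is negative. *)

(* Complex numbers are modelled by algC. *)
From HB Require Import structures.
From mathcomp Require Import all_boot all_order all_algebra all_field.
Set Implicit Arguments. Unset Strict Implicit. Unset Printing Implicit Defensive.
Import Order.TTheory GRing.Theory Num.Theory.
Local Open Scope ring_scope.

Definition digraph n (arc : rel 'I_n) : Prop := forall i, ~~ arc i i.

Definition signing n (arc : rel 'I_n) (sigma : 'I_n -> 'I_n -> algC) : Prop :=
  forall i j, arc i j -> sigma i j = 1 \/ sigma i j = -1.

Definition adj n (arc : rel 'I_n) (sigma : 'I_n -> 'I_n -> algC) : 'M[algC]_n :=
  \matrix_(i, j) (if arc i j then sigma i j else 0).

Definition charpoly_sd n (arc : rel 'I_n) (sigma : 'I_n -> 'I_n -> algC)
  : {poly algC} := char_poly (adj arc sigma).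

Definition bipartite n (arc : rel 'I_n) : Prop :=
  exists part : 'I_n -> bool, forall i j, arc i j -> part i != part j.

Definition dcycle n (arc : rel 'I_n) (c : seq 'I_n) : bool :=
  [&& (2 <= size c)%N, uniq c & cycle arc c].

Definition cycle_sign n (sigma : 'I_n -> 'I_n -> algC) (c : seq 'I_n) : algC :=
  \prod_(p <- zip c (rot 1 c)) sigma p.1 p.2.

Definition Delta1 n (arc : rel 'I_n) (sigma : 'I_n -> 'I_n -> algC) : Prop :=
  digraph arc /\ signing arc sigma /\ bipartite arc /\
  (forall c, dcycle arc c ->
     ((size c %% 4)%N = 0%N -> cycle_sign sigma c = -1) /\
     ((size c %% 4)%N = 2%N -> cycle_sign sigma c = 1)).

Definition Delta2 n (arc : rel 'I_n) (sigma : 'I_n -> 'I_n -> algC) : Prop :=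
  digraph arc /\ signing arc sigma /\ bipartite arc /\
  (forall c, dcycle arc c -> cycle_sign sigma c = -1).

Definition is_spec n (arc : rel 'I_n) (sigma : 'I_n -> 'I_n -> algC)
  (s : seq algC) : Prop :=
  charpoly_sd arc sigma = \prod_(z <- s) ('X - z%:P).

Definition energy (s : seq algC) : algC := \sum_(z <- s) `|'Re z|.

Definition eps_n (n : nat) : algC :=
  match (n %% 4)%N with
  | 0 => 1
  | 1 => 'i
  | 2 => -1
  | _ => - 'i
  end.

(* Expand both characteristic polynomials by Leibniz's formula and split each
   permutation into its cycles.  A cycle contributes to det(z - A(S)) only if
   it is a directed cycle of the digraph, and then it contributes its sign.
   Such a cycle has even length k by bipartiteness, and the sign conditions
   defining Delta^1 and Delta^2 say exactly that sign_1 = i^k sign_2.  Hence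
   det(z - A(S_1)) = det(z - i A(S_2)), and evaluating at i z gives
   phi_1(i z) = i^n phi_2(z); the spectral and energy statements follow since
   the roots of phi_1 are i times those of phi_2 and Re(i z) = - Im z. *)
From HB Require Import structures.
From mathcomp Require Import all_boot all_order all_algebra all_field all_fingroup.
From mathcomp Require Import zify.
Set Implicit Arguments. Unset Strict Implicit. Unset Printing Implicit Defensive.
Import Order.TTheory GRing.Theory Num.Theory.
Local Open Scope ring_scope.

Lemma map_traject (T : Type) (f : T -> T) x k :
  map f (traject f x k) = traject f (f x) k.
Proof. by elim: k x => [|k IHk] x //=; rewrite IHk. Qed.

Lemma rot1_traject (T : Type) (f : T -> T) x k :
  iter k f x = x -> rot 1 (traject f x k) = map f (traject f x k).
Proof.
case: k => [|k] // fkx; rewrite map_traject trajectS rot1_cons trajectSr.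
by rewrite -iterSr fkx.
Qed.

Lemma fcycle_traject (T : eqType) (f : T -> T) x k :
  iter k f x = x -> fcycle f (traject f x k).
Proof.
case: k => [|k] // fkx; rewrite trajectS /= -[x in rcons _ x]fkx iterSr.
by rewrite -trajectSr fpath_traject.
Qed.

Lemma path_alternating (T : Type) (e : rel T) (part : T -> bool) x p :
  (forall y z, e y z -> part y != part z) ->
  path e x p -> part (last x p) = part x (+) odd (size p).
Proof.
move=> e_part; elim: p x => [|y p IHp] x /=; first by rewrite addbF.
case/andP=> /e_part exy /(IHp y) ->.
by move: exy; case: (part x); case: (part y); case: (odd (size p)).
Qed.

Lemma cycle_size_even (T : Type) (e : rel T) (part : T -> bool) c :
  (forall y z, e y z -> part y != part z) -> path.cycle e c -> ~~ odd (size c).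
Proof.
case: c => [|x p] // e_part /(path_alternating e_part).
by rewrite last_rcons size_rcons; case: (part x); case: (odd _).
Qed.

Lemma expi_mod4 k : 'i ^+ (k %% 4) = 'i ^+ k :> algC.
Proof. by apply: expr_mod; rewrite (exprM _ 2 2) sqrCi sqrrN expr1n. Qed.

Lemma eps_nE n : eps_n n = 'i ^+ n.
Proof.
rewrite -expi_mod4 /eps_n; have : (n %% 4 < 4)%N by rewrite ltn_mod.
case: (n %% 4)%N => [|[|[|[|//]]]] _; rewrite ?expr0 ?expr1 ?sqrCi //.
by rewrite exprS sqrCi mulrN1.
Qed.

Lemma prodrMl_seq (R : comNzRingType) (T : Type) (a : R) (F : T -> R) s :
  \prod_(t <- s) (a * F t) = a ^+ size s * \prod_(t <- s) F t.
Proof.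
elim: s => [|t s IHs]; first by rewrite !big_nil mulr1.
by rewrite !big_cons IHs exprS mulrACA.
Qed.

Lemma eq_poly_horner (R : numDomainType) (p q : {poly R}) :
  (forall x, p.[x] = q.[x]) -> p = q.
Proof.
move=> pq; apply/eqP; rewrite -subr_eq0; apply: contraT => pq_neq0.
set xs : seq R := [seq i%:R | i <- iota 0 (size (p - q))].
have roots_xs : all (root (p - q)) xs.
  by apply/allP => y _; rewrite /root !hornerE pq subrr.
have uniq_xs : uniq xs.
  by rewrite map_inj_uniq ?iota_uniq // => a b /eqP; rewrite eqr_nat => /eqP.
by have := max_poly_roots pq_neq0 roots_xs uniq_xs; rewrite size_map size_iota ltnn.
Qed.

Section PermutationProducts.

Variables (T : finType) (R : comNzRingType).
Implicit Types (s : {perm T}) (x : T).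

Lemma porbit_moved s x i : s x != x -> i \in porbit s x -> s i != i.
Proof.
move=> sx_x /porbitP[j ->]; apply: contra sx_x => /eqP fixed.
apply/eqP/(@perm_inj _ (s ^+ j)).
by rewrite -permM -expgS expgSr permM.
Qed.

Lemma prod_porbit_seq s x (F : T -> R) :
  \prod_(i in porbit s x) F i = \prod_(i <- traject s x #|porbit s x|) F i.
Proof.
rewrite (big_uniq _ (uniq_traject_porbit s x)).
by apply: eq_bigl => i; rewrite porbit_traject.
Qed.

Lemma prod_moved_porbits s (F G : T -> R) :
  (forall x, s x != x ->
     \prod_(i in porbit s x) F i = \prod_(i in porbit s x) G i) ->
  \prod_(i | s i != i) F i = \prod_(i | s i != i) G i.
Proof.
move=> FG; pose moved := [pred i | s i != i].
have in_orbit x (H : T -> R) : s x != x ->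
    \prod_(i in moved | porbit s i == porbit s x) H i
    = \prod_(i in porbit s x) H i.
  move=> sx_x; apply: eq_bigl => i; rewrite eq_porbit_mem inE.
  by case: (boolP (i \in _)) => [/(porbit_moved sx_x) ->|]; rewrite ?andbF.
rewrite -[LHS]/(\prod_(i in moved) F i) -[RHS]/(\prod_(i in moved) G i).
rewrite !(partition_big_imset (porbit s)).
by apply: eq_bigr => _ /imsetP[x sx_x ->]; rewrite !in_orbit ?FG.
Qed.

End PermutationProducts.

Lemma det_eq_porbits (R : comNzRingType) n (M1 M2 : 'M[R]_n) :
  (forall i, M1 i i = M2 i i) ->
  (forall (s : 'S_n) x, s x != x ->
     \prod_(i in porbit s x) M1 i (s i) = \prod_(i in porbit s x) M2 i (s i)) ->
  \det M1 = \det M2.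
Proof.
move=> diag orbits; apply: eq_bigr => s _; congr (_ * _).
rewrite (bigID (fun i => s i == i)) [RHS](bigID (fun i => s i == i)) /=.
rewrite (prod_moved_porbits (orbits s)); congr (_ * _).
by apply: eq_bigr => i /eqP ->.
Qed.

Section SignedDigraphs.

Variables (n : nat) (arc : rel 'I_n) (sigma1 sigma2 : 'I_n -> 'I_n -> algC).

Lemma dcycle_traject (f : 'I_n -> 'I_n) x k :
  (1 < k)%N -> iter k f x = x -> uniq (traject f x k) ->
  all (fun i => arc i (f i)) (traject f x k) -> dcycle arc (traject f x k).
Proof.
move=> k_gt1 fkx uniq_c arcs_c; rewrite /dcycle size_traject k_gt1 uniq_c /=.
have arcs_f : {in traject f x k &, subrel (frel f) arc}.
  by move=> a b a_c _ /eqP <-; exact: (allP arcs_c).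
by apply: (sub_in_cycle arcs_f _ (fcycle_traject fkx)); apply/allP.
Qed.

Lemma cycle_sign_traject (sg : 'I_n -> 'I_n -> algC) (f : 'I_n -> 'I_n) x k :
  iter k f x = x ->
  cycle_sign sg (traject f x k) = \prod_(i <- traject f x k) sg i (f i).
Proof.
move=> fkx; rewrite /cycle_sign rot1_traject //.
by rewrite -{1}(map_id (traject f x k)) zip_map big_map.
Qed.

Lemma Delta_cycle_sign c : Delta1 arc sigma1 -> Delta2 arc sigma2 ->
  dcycle arc c -> cycle_sign sigma1 c = 'i ^+ size c * cycle_sign sigma2 c.
Proof.
move=> [_ [_ [[part bip] D1]]] [_ [_ [_ D2]]] dc.
have /(cycle_size_even bip) even_c : path.cycle arc c by case/and3P: dc.
have [size0 size2] := D1 c dc; rewrite D2 // -expi_mod4.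
have : (size c %% 4 = 0 \/ size c %% 4 = 2)%N.
  have : (size c %% 2 = 0)%N by rewrite modn2 (negbTE even_c).
  lia.
by case=> [/[dup] /size0 -> -> | /[dup] /size2 -> ->];
  rewrite ?expr0 ?sqrCi ?mulN1r ?mul1r ?opprK.
Qed.

Lemma prod_porbit_adj (s : 'S_n) x :
  Delta1 arc sigma1 -> Delta2 arc sigma2 -> s x != x ->
  \prod_(i in porbit s x) adj arc sigma1 i (s i)
  = \prod_(i in porbit s x) ('i *: adj arc sigma2) i (s i).
Proof.
move=> D1 D2 sx_x; under [RHS]eq_bigr do rewrite mxE.
rewrite prodrMl !prod_porbit_seq.
set k := #|porbit s x|; set c := traject s x k.
have fkx : iter k s x = x := iter_porbit s x.
have [arcs_c | /allPn[i c_i no_arc]] := boolP (all (fun i => arc i (s i)) c);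
  last by rewrite !(big_rem i c_i) !mxE /= (negbTE no_arc) !mul0r mulr0.
have k_gt1 : (1 < k)%N.
  have k_neq1 : k != 1%N by apply: contraNneq sx_x => k1; rewrite -{2}fkx k1.
  by have := card_porbit_neq0 s x; rewrite -/k; lia.
have dc : dcycle arc c.
  exact: dcycle_traject k_gt1 fkx (uniq_traject_porbit s x) arcs_c.
have adj_sign sg : \prod_(i <- c) adj arc sg i (s i) = cycle_sign sg c.
  rewrite cycle_sign_traject //; apply: eq_big_seq => i c_i.
  by rewrite mxE (allP arcs_c i c_i).
by rewrite !adj_sign Delta_cycle_sign // size_traject.
Qed.

Lemma char_poly_Delta : digraph arc -> Delta1 arc sigma1 -> Delta2 arc sigma2 ->
  char_poly (adj arc sigma1) = char_poly ('i *: adj arc sigma2).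
Proof.
move=> loopless D1 D2; apply: det_eq_porbits => [i|s x sx_x].
  by rewrite !mxE (negbTE (loopless i)) mulr0.
have offdiag (M : 'M[algC]_n) : \prod_(i in porbit s x) char_poly_mx M i (s i)
    = (\prod_(i in porbit s x) - M i (s i))%:P.
  rewrite rmorph_prod; apply: eq_bigr => i i_orb.
  by rewrite !mxE eq_sym (negbTE (porbit_moved sx_x i_orb)) mulr0n sub0r rmorphN.
by rewrite !offdiag !prodrN prod_porbit_adj.
Qed.

End SignedDigraphs.

Lemma horner_char_poly (R : comNzRingType) n (M : 'M[R]_n) z :
  (char_poly M).[z] = \det (z%:M - M).
Proof.
rewrite /char_poly -horner_evalE -det_map_mx; congr (\det _).
apply/matrixP => i j; rewrite !mxE rmorphB rmorphMn /= !horner_evalE.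
by rewrite hornerX hornerC.
Qed.

Theorem mainTheorem13 (n : nat) (arc : rel 'I_n)
  (sigma1 sigma2 : 'I_n -> 'I_n -> algC) :
  digraph arc -> bipartite arc ->
  Delta1 arc sigma1 -> Delta2 arc sigma2 ->
  (forall z : algC,
     (charpoly_sd arc sigma1).['i * z] = eps_n n * (charpoly_sd arc sigma2).[z]) /\
  (forall s1 s2 : seq algC, is_spec arc sigma1 s1 -> is_spec arc sigma2 s2 ->
     [/\ perm_eq s1 [seq 'i * z | z <- s2],
         energy s1 = \sum_(z <- s2) `|'Im z| &
         energy s2 = \sum_(z <- s1) `|'Im z|]).
Proof.
move=> loopless _ D1 D2.
have phi_iz z : (charpoly_sd arc sigma1).['i * z]
                = eps_n n * (charpoly_sd arc sigma2).[z].
  rewrite /charpoly_sd (char_poly_Delta loopless D1 D2) !horner_char_poly.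
  by rewrite -scale_scalar_mx -scalerBr detZ eps_nE.
split=> // s1 s2 spec1 spec2.
have size_s2 : size s2 = n.
  have := size_char_poly (adj arc sigma2).
  by rewrite -/(charpoly_sd _ _) spec2 size_prod_XsubC => -[].
have spec1_is2 : perm_eq s1 [seq 'i * z | z <- s2].
  apply: prod_XsubC_eq; rewrite -spec1; apply: eq_poly_horner => x.
  have -> : x = 'i * (- 'i * x) by rewrite mulrA mulrN -expr2 sqrCi opprK mul1r.
  rewrite phi_iz spec2 !horner_prod big_map eps_nE -size_s2 -prodrMl_seq.
  by apply: eq_bigr => z _; rewrite !hornerXsubC mulrBr.
split=> //; rewrite /energy (perm_big _ spec1_is2) big_map.
  by apply: eq_bigr => z _; rewrite ReMil normrN.
by apply: eq_bigr => z _; rewrite ImMil.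
Qed.
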